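(* Let $\mathcal H$ be an infinite-dimensional complex Hilbert space and $D\subseteq\mathcal H$ a dense linear subspace. Let $\mathcal V_{fD}(\mathcal H)=\{t\in\mathcal V_f(\mathcal H)\mid t\text{ is bounded, or }D(t)=D\}$. Then $\mathcal V_{fD}(\mathcal H)$ is a sub-generalized effect algebra of $(\mathcal V_f(\mathcal H);\oplus,o)$, the operation $\oplus_{|\mathcal V_{fD}(\mathcal H)}$ is total, and $(\mathcal V_{fD}(\mathcal H);\oplus_{|\mathcal V_{fD}(\mathcal H)},o)$ is monotone Dedekind upwards and downwards $\sigma$-complete.
   Context: Bilinear forms $t$ on $\mathcal H$ are sesquilinear maps $D(t)\times D(t)\to\mathbb C$ on a dense linear subspace $D(t)$ (linear in the first argument); $t$ is positive if $t(x,x)\ge0$ on $D(t)$, bounded if $\sup\{t(x,x)\mid x\in D(t),\|x\|=1\}<\infty$. The sum $t+s$ has domain $D(t)\cap D(s)$. $o$ is the zero form on $\mathcal H$. $\mathcal V_f(\mathcal H)$ is the set of positive bilinear forms with dense domain such that $D(t)=\mathcal H$ whenever $t$ is bounded; $t\oplus s$ is defined iff $t$ or $s$ is bounded or $D(t)=D(s)$, and then $t\oplus s=t+s$; it is a generalized effect algebra. A subset $Q$ of a generalized effect algebra $(E;\oplus,0)$ is a sub-generalized effect algebra if $0\in Q$ and whenever $x\oplus y=z$ in $E$ with two of $x,y,z$ in $Q$, all three are in $Q$; $x\oplus_{|Q}y$ is defined iff $x\oplus y$ is defined and lies in $Q$. The induced order of a generalized effect algebra is $x\le y$ iff $x\oplus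 z=y$ for some $z$. It is monotone Dedekind upwards $\sigma$-complete if every increasing sequence with an upper bound has a supremum, and monotone Dedekind downwards $\sigma$-complete if every decreasing sequence has an infimum. *)

From mathcomp Require Import all_boot all_order all_algebra.
From mathcomp Require Import complex.
From mathcomp Require Import boolp classical_sets reals.
Set Implicit Arguments. Unset Strict Implicit. Unset Printing Implicit Defensive.
Import Order.TTheory GRing.Theory Num.Theory.
Local Open Scope ring_scope.
Local Open Scope classical_set_scope.

Record hilbert (R : realType) (H : lmodType R[i]) := Hilbert {
  ip : H -> H -> R[i];
  ip_linl : forall (a : R[i]) (x y z : H), ip (a *: x + y) z = a * ip x z + ip y z;
  ip_sym : forall x y : H, ip y x = Num.conj (ip x y);
  ip_ge0 : forall x : H, 0 <= ip x x;
  ip_eq0 : forall x : H, ip x x = 0 -> x = 0;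
  ip_complete : forall u : nat -> H,
    (forall e : R, 0 < e -> exists N : nat, forall m n : nat, (N <= m)%N -> (N <= n)%N ->
        Num.sqrt (complex.Re (ip (u m - u n) (u m - u n))) < e) ->
    exists l : H, forall e : R, 0 < e -> exists N : nat, forall n : nat, (N <= n)%N ->
        Num.sqrt (complex.Re (ip (u n - l) (u n - l))) < e
}.

Section Forms.
Variables (R : realType) (H : lmodType R[i]) (hs : hilbert H).

Definition hnorm (x : H) : R := Num.sqrt (complex.Re (ip hs x x)).

Definition infinite_dim : Prop :=
  forall n : nat, exists v : 'I_n -> H,
    forall c : 'I_n -> R[i], \sum_(i < n) c i *: v i = 0 -> forall i, c i = 0.

Definition lin_subspace (D : set H) : Prop :=
  0 \in D /\ (forall x y, x \in D -> y \in D -> x + y \in D) /\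
  (forall (a : R[i]) x, x \in D -> a *: x \in D).

Definition dense_subspace (D : set H) : Prop :=
  lin_subspace D /\
  forall (x : H) (e : R), 0 < e -> exists y, y \in D /\ hnorm (x - y) < e.

(* A bilinear form is a pair (domain, values).  Values outside
   D(t) x D(t) are irrelevant; we normalise them to 0 so that Leibniz
   equality of records is equality of forms. *)
Record form := Form { fdom : set H; fval : H -> H -> R[i] }.

Definition is_form (t : form) : Prop :=
  [/\ dense_subspace (fdom t),
      (forall (a : R[i]) x y z, x \in fdom t -> y \in fdom t -> z \in fdom t ->
          fval t (a *: x + y) z = a * fval t x z + fval t y z),
      (forall (a : R[i]) x y z, x \in fdom t -> y \in fdom t -> z \in fdom t ->
          fval t z (a *: x + y) = Num.conj a * fval t z x + fval t z y)
    & (forall x y, ~ (x \in fdom t /\ y \in fdom t) -> fval t x y = 0)].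

Definition positive_form (t : form) : Prop :=
  forall x, x \in fdom t -> 0 <= fval t x x.

Definition bounded_form (t : form) : Prop :=
  exists M : R, forall x, x \in fdom t -> hnorm x = 1 -> `|fval t x x| <= (M%:C)%C.

Definition form0 : form := Form setT (fun _ _ => 0).

Definition form_add (t s : form) : form :=
  Form (fdom t `&` fdom s)
       (fun x y => if (x \in fdom t `&` fdom s) && (y \in fdom t `&` fdom s)
                   then fval t x y + fval s x y else 0).

Definition Vf (t : form) : Prop :=
  [/\ is_form t, positive_form t & (bounded_form t -> fdom t = setT)].

(* t (+) s is defined iff t or s is bounded or D(t) = D(s); then t (+) s = t + s *)
Definition oplus_def (t s : form) : Prop :=
  bounded_form t \/ bounded_form s \/ fdom t = fdom s.

Definition VfD (D : set H) (t : form) : Prop :=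
  Vf t /\ (bounded_form t \/ fdom t = D).

End Forms.

(* Generic notions for partial algebras (E; def, op, zero), where     *)
(* E : T -> Prop is the carrier, def x y says "x (+) y is defined"     *)
(* and op x y is then its value.                                       *)
Section PartialAlg.
Variable T : Type.

Definition sub_gea (E : T -> Prop) (def : T -> T -> Prop) (op : T -> T -> T)
    (zero : T) (Q : T -> Prop) : Prop :=
  [/\ (forall x, Q x -> E x), Q zero &
      forall x y, E x -> E y -> def x y ->
        ((Q x /\ Q y) \/ (Q x /\ Q (op x y)) \/ (Q y /\ Q (op x y))) ->
        [/\ Q x, Q y & Q (op x y)]].

Definition restr_def (def : T -> T -> Prop) (op : T -> T -> T) (Q : T -> Prop)
    (x y : T) : Prop := def x y /\ Q (op x y).

Definition ind_le (Q : T -> Prop) (def : T -> T -> Prop) (op : T -> T -> T)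
    (x y : T) : Prop := exists z, [/\ Q z, def x z & op x z = y].

Definition is_sup (Q : T -> Prop) (le : T -> T -> Prop) (u : nat -> T) (s : T) :=
  [/\ Q s, (forall n, le (u n) s) &
      forall b, Q b -> (forall n, le (u n) b) -> le s b].

Definition is_inf (Q : T -> Prop) (le : T -> T -> Prop) (u : nat -> T) (s : T) :=
  [/\ Q s, (forall n, le s (u n)) &
      forall b, Q b -> (forall n, le b (u n)) -> le b s].

Definition mono_dedekind_up (Q : T -> Prop) (le : T -> T -> Prop) : Prop :=
  forall u : nat -> T, (forall n, Q (u n)) -> (forall n, le (u n) (u n.+1)) ->
    (exists b, Q b /\ forall n, le (u n) b) -> exists s, is_sup Q le u s.

Definition mono_dedekind_down (Q : T -> Prop) (le : T -> T -> Prop) : Prop :=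
  forall u : nat -> T, (forall n, Q (u n)) -> (forall n, le (u n.+1) (u n)) ->
    exists s, is_inf Q le u s.

End PartialAlg.

(* A member of V_fD is either bounded, and then defined on all of H, or has domain D;
   this dichotomy is stable under sums, which gives the sub-generalized effect algebra
   and the totality of (+). In V_fD, x <= y iff D(y) is contained in D(x) and
   x(p,p) <= y(p,p) on D(y): the difference y - x, restricted to D, is brought back into
   V_fD by extending it by continuity to H when it is bounded on D, and keeping it on D
   otherwise. A monotone sequence converges pointwise on D; polarizing the limit
   quadratic form gives a positive sesquilinear form on D whose completion in the same
   sense is the supremum (resp. infimum). *)

From Pilot Require Import Defs.
From mathcomp Require Import all_boot all_order all_algebra complex.
From mathcomp Require Import boolp classical_sets reals topology normedtype sequences.
From mathcomp Require Import ring lra.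
Set Implicit Arguments. Unset Strict Implicit. Unset Printing Implicit Defensive.
Import Order.TTheory GRing.Theory Num.Theory numFieldNormedType.Exports.
Local Open Scope ring_scope.
Local Open Scope classical_set_scope.
Local Notation Re := complex.Re.
Local Notation Im := complex.Im.

Section ComplexSequences.
Variable R : realType.
Local Notation C := R[i].

Lemma ReD (z w : C) : Re (z + w) = Re z + Re w. Proof. by case: z; case: w. Qed.
Lemma ImD (z w : C) : Im (z + w) = Im z + Im w. Proof. by case: z; case: w. Qed.
Lemma ReM (z w : C) : Re (z * w) = Re z * Re w - Im z * Im w.
Proof. by case: z; case: w. Qed.
Lemma ImM (z w : C) : Im (z * w) = Re z * Im w + Im z * Re w.
Proof. by case: z => a b; case: w => c d /=; rewrite addrC. Qed.
Lemma complex_eq (z w : C) : Re z = Re w -> Im z = Im w -> z = w.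
Proof. by case: z; case: w => /= ? ? ? ? -> ->. Qed.

Definition cvgC (u : nat -> C) (l : C) :=
  (fun n => Re (u n)) @ \oo --> Re l /\ (fun n => Im (u n)) @ \oo --> Im l.

Lemma cvgC_unique u l l' : cvgC u l -> cvgC u l' -> l = l'.
Proof.
by move=> [a b] [c d]; apply: complex_eq; [exact: (cvg_unique _ a c) | exact: (cvg_unique _ b d)].
Qed.

Lemma cvgC_cst c : cvgC (fun=> c) c.
Proof. by split; apply: cvg_cst. Qed.

Lemma cvgC_real (u : nat -> R) (l : R) : u @ \oo --> l -> cvgC (fun n => (u n)%:C%C) l%:C%C.
Proof. by split => //=; apply: cvg_cst. Qed.

Lemma cvgCD u v l l' : cvgC u l -> cvgC v l' -> cvgC (fun n => u n + v n) (l + l').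
Proof.
move=> [ul1 ul2] [vl1 vl2]; split.
- by rewrite ReD; under eq_fun do rewrite ReD; apply: cvgD.
- by rewrite ImD; under eq_fun do rewrite ImD; apply: cvgD.
Qed.

Lemma cvgCMl c u l : cvgC u l -> cvgC (fun n => c * u n) (c * l).
Proof.
move=> [ul1 ul2]; split.
- rewrite ReM; under eq_fun do rewrite ReM.
  by apply: cvgB; apply: cvgM => //; apply: cvg_cst.
- rewrite ImM; under eq_fun do rewrite ImM.
  by apply: cvgD; apply: cvgM => //; apply: cvg_cst.
Qed.

Lemma cvgC_sum (s : seq C) (u : C -> nat -> R) (l : C -> R) :
  (forall c, u c @ \oo --> l c) ->
  cvgC (fun n => \sum_(c <- s) c * (u c n)%:C%C) (\sum_(c <- s) c * (l c)%:C%C).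
Proof.
move=> ul; elim: s => [|c s IH].
  by under eq_fun do rewrite big_nil; rewrite big_nil; apply: cvgC_cst.
under eq_fun do rewrite big_cons; rewrite big_cons.
exact/cvgCD/IH/cvgCMl/cvgC_real.
Qed.

End ComplexSequences.

Section Sesquilinear.
Variables (R : realType) (H : lmodType R[i]).
Local Notation C := R[i].

Definition sesquilinear_on (A : set H) (f : H -> H -> C) :=
  (forall (a : C) x y z, x \in A -> y \in A -> z \in A ->
     f (a *: x + y) z = a * f x z + f y z) /\
  (forall (a : C) x y z, x \in A -> y \in A -> z \in A ->
     f z (a *: x + y) = Num.conj a * f z x + f z y).

Definition qform (f : H -> H -> C) (x : H) : R := Re (f x x).

Definition polarize (q : H -> R) (x y : H) : C :=
  (\sum_(c <- [:: 1; -1; 'i%C; - 'i%C]) c * (q (x + c *: y))%:C%C) / 4%:R.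

Lemma sesquilinear_onD A f g : sesquilinear_on A f -> sesquilinear_on A g ->
  sesquilinear_on A (fun x y => f x y + g x y).
Proof. by move=> [f1 f2] [g1 g2]; split=> *; rewrite ?f1 ?g1 ?f2 ?g2 //; ring. Qed.

Lemma sesquilinear_onB A f g : sesquilinear_on A f -> sesquilinear_on A g ->
  sesquilinear_on A (fun x y => f x y - g x y).
Proof. by move=> [f1 f2] [g1 g2]; split=> *; rewrite ?f1 ?g1 ?f2 ?g2 //; ring. Qed.

Section Subspace.
Variable A : set H.
Hypothesis hA : lin_subspace A.

Lemma subspace0 : 0 \in A. Proof. by case: hA. Qed.
Lemma subspaceD x y : x \in A -> y \in A -> x + y \in A.
Proof. by case: hA => _ []; auto. Qed.
Lemma subspaceZ (a : C) x : x \in A -> a *: x \in A.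
Proof. by case: hA => _ []; auto. Qed.
Lemma subspaceDZ (a : C) x y : x \in A -> y \in A -> x + a *: y \in A.
Proof. by move=> hx hy; apply: subspaceD => //; apply: subspaceZ. Qed.
Lemma subspaceB x y : x \in A -> y \in A -> x - y \in A.
Proof. by move=> hx hy; rewrite -scaleN1r; apply: subspaceDZ. Qed.

End Subspace.

Section SesquilinearTheory.
Variables (A : set H) (f : H -> H -> C).
Hypotheses (hA : lin_subspace A) (hf : sesquilinear_on A f).

Lemma sesq0l z : z \in A -> f 0 z = 0.
Proof.
move=> hz; have := hf.1 1 0 0 z (subspace0 hA) (subspace0 hA) hz.
by rewrite scale1r addr0 mul1r => h; apply: (addrI (f 0 z)); rewrite addr0 -h.
Qed.

Lemma sesq0r z : z \in A -> f z 0 = 0.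
Proof.
move=> hz; have := hf.2 1 0 0 z (subspace0 hA) (subspace0 hA) hz.
by rewrite scale1r addr0 rmorph1 mul1r => h; apply: (addrI (f z 0)); rewrite addr0 -h.
Qed.

Lemma sesqDl x y z : x \in A -> y \in A -> z \in A -> f (x + y) z = f x z + f y z.
Proof. by move=> *; rewrite -{1}[x]scale1r hf.1 // mul1r. Qed.

Lemma sesqDr x y z : x \in A -> y \in A -> z \in A -> f z (x + y) = f z x + f z y.
Proof. by move=> *; rewrite -{1}[x]scale1r hf.2 // rmorph1 mul1r. Qed.

Lemma sesqZl a x z : x \in A -> z \in A -> f (a *: x) z = a * f x z.
Proof. by move=> *; rewrite -[a *: x]addr0 hf.1 ?subspace0 // sesq0l // addr0. Qed.

Lemma sesqZr a x z : x \in A -> z \in A -> f z (a *: x) = Num.conj a * f z x.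
Proof. by move=> *; rewrite -[a *: x]addr0 hf.2 ?subspace0 // sesq0r // addr0. Qed.

Lemma sesq_expand (a b : C) x y : x \in A -> y \in A ->
  f (a *: x + b *: y) (a *: x + b *: y) =
  a * Num.conj a * f x x + a * Num.conj b * f x y + b * Num.conj a * f y x
  + b * Num.conj b * f y y.
Proof.
move=> hx hy; have hax := subspaceZ hA a hx; have hby := subspaceZ hA b hy.
by rewrite sesqDl ?subspaceD // !sesqDr // !sesqZl // !sesqZr //; ring.
Qed.

Lemma sesq_polarize x y : x \in A -> y \in A ->
  f x y = (\sum_(c <- [:: 1; -1; 'i%C; - 'i%C]) c * f (x + c *: y) (x + c *: y)) / 4%:R.
Proof.
move=> hx hy; rewrite !big_cons big_nil addr0 -[x]scale1r !sesq_expand // !scale1r.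
have conj_i : Num.conj ('i%C : C) = - 'i%C by apply: complex_eq; rewrite /= ?oppr0.
have conj_Ni : Num.conj (- 'i%C : C) = 'i%C by apply: complex_eq; rewrite /= ?oppr0 ?opprK.
rewrite rmorph1 rmorphN1 conj_i conj_Ni.
apply: (canRL (mulfK _)); first by rewrite pnatr_eq0.
move: (f x x) (f x y) (f y x) (f y y) (sqr_i R) => a b c d; move: 'i%C => j j2.
apply/eqP; rewrite -subr_eq0; apply/eqP.
by transitivity ((j ^+ 2 + 1) * (2%:R * b - 2%:R * c)); [ring | rewrite j2 addNr mul0r].
Qed.

Lemma qformZ (a : C) x : x \in A -> qform f (a *: x) = Re (a * Num.conj a) * qform f x.
Proof.
move=> hx; rewrite /qform sesqZl ?subspaceZ // sesqZr // mulrA [LHS]ReM.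
by case: a => u v /=; ring.
Qed.

End SesquilinearTheory.

Section PositiveForms.
Variables (A : set H) (f : H -> H -> C).
Hypotheses (hA : lin_subspace A) (hf : sesquilinear_on A f).
Hypothesis f_ge0 : forall x, x \in A -> 0 <= f x x.

Lemma qformE x : x \in A -> f x x = (qform f x)%:C%C.
Proof.
by move/f_ge0; rewrite lecE => /andP[/eqP Im0 _]; apply: complex_eq => //=; rewrite -Im0.
Qed.

Lemma qform_ge0 x : x \in A -> 0 <= qform f x.
Proof. by move=> hx; move/f_ge0: (hx); rewrite qformE // ler0c. Qed.

Lemma polarizeE x y : x \in A -> y \in A -> f x y = polarize (qform f) x y.
Proof.
move=> hx hy; rewrite (sesq_polarize hA hf hx hy); congr (_ / _).
by apply: eq_bigr => c _; rewrite qformE ?subspaceDZ.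
Qed.

Lemma qform_lincomb (s t : R) x y : x \in A -> y \in A ->
  qform f (s%:C%C *: x + t%:C%C *: y) =
  s ^+ 2 * qform f x + s * t * Re (f x y + f y x) + t ^+ 2 * qform f y.
Proof.
move=> hx hy; have conj_real (r : R) : Num.conj r%:C%C = r%:C%C.
  by apply: complex_eq; rewrite /= ?oppr0.
rewrite /qform (sesq_expand hA hf) // !conj_real !ReD !ReM /=; ring.
Qed.

Lemma qformD_le x y : x \in A -> y \in A ->
  qform f (x + y) <= 2%:R * qform f x + 2%:R * qform f y.
Proof.
move=> hx hy; have := qform_ge0 (subspaceB hA hx hy).
have := qform_lincomb 1 1 hx hy; have := qform_lincomb 1 (-1) hx hy.
have -> : (-1 : R)%:C%C = -1 by apply: complex_eq; rewrite /= ?oppr0.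
rewrite !scaleN1r !scale1r => -> ->; lra.
Qed.

(* AM-GM applied to [0 <= qform f (r x + y / r)] and [0 <= qform f (r x - y / r)],
   with [r ^+ 2 = rho]. *)
Lemma qform_cross_le x y (rho : R) : x \in A -> y \in A -> 0 < rho ->
  `|Re (f x y + f y x)| <= rho * qform f x + qform f y / rho.
Proof.
move=> hx hy rho0; set r := Num.sqrt rho.
have r0 : 0 < r by rewrite sqrtr_gt0.
have r2 : r ^+ 2 = rho by rewrite sqr_sqrtr // ltW.
have rV2 : r^-1 ^+ 2 = rho^-1 by rewrite exprVn r2.
have rrV : r * r^-1 = 1 by rewrite mulfV // gt_eqF.
have := qform_ge0 (subspaceD hA (subspaceZ hA r%:C%C hx) (subspaceZ hA (r^-1)%:C%C hy)).
have := qform_ge0 (subspaceD hA (subspaceZ hA r%:C%C hx) (subspaceZ hA (- r^-1)%:C%C hy)).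
rewrite !qform_lincomb // sqrrN mulrN rrV r2 rV2 [qform f y / rho]mulrC.
by rewrite ler_norml; move=> h1 h2; apply/andP; split; lra.
Qed.

Lemma qform_ucont (K e : R) : 0 < e ->
  exists2 d : R, 0 < d & forall x h, x \in A -> h \in A ->
    qform f x <= K -> qform f h < d -> `|qform f (x + h) - qform f x| < e.
Proof.
move=> e0; set rho := e / (2%:R * (`|K| + 1)).
have rho0 : 0 < rho by rewrite divr_gt0 // mulr_gt0 // ltr_wpDl.
set c := rho^-1 + 1; have c0 : 0 < c by rewrite ltr_wpDl // invr_ge0 ltW.
exists (e / (2%:R * c)) => [|x h hx hh qx qh]; first by rewrite divr_gt0 // mulr_gt0.
have -> : qform f (x + h) - qform f x = Re (f x h + f h x) + qform f h.
  have := qform_lincomb 1 1 hx hh; rewrite !scale1r => ->; ring.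
apply: (le_lt_trans (ler_normD _ _)); rewrite [`|qform f h|]ger0_norm ?qform_ge0 //.
apply: (le_lt_trans (lerD (qform_cross_le hx hh rho0) (lexx _))).
have rhoK : rho * (`|K| + 1) = e / 2%:R by rewrite /rho; field; rewrite gt_eqF // ltr_wpDl.
have cd : c * (e / (2%:R * c)) = e / 2%:R by field; rewrite gt_eqF.
have qxK : rho * qform f x <= e / 2%:R.
  by rewrite -rhoK ler_pM2l // (le_trans qx) // (le_trans (ler_norm K)) // lerDl.
have qhc : c * qform f h < e / 2%:R by rewrite -cd ltr_pM2l.
have -> : e = e / 2%:R + e / 2%:R by field.
rewrite -addrA; apply: ler_ltD => //; apply: le_lt_trans qhc.
by rewrite /c mulrDl mul1r mulrC.
Qed.

End PositiveForms.

End Sesquilinear.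

Lemma cvgC_polarize (R : realType) (H : lmodType R[i]) (q : nat -> H -> R) (Q : H -> R)
    (a b : nat -> H) (x y : H) :
  (forall c, (fun n => q n (a n + c *: b n)) @ \oo --> Q (x + c *: y)) ->
  cvgC (fun n => polarize (q n) (a n) (b n)) (polarize Q x y).
Proof.
move=> qQ; rewrite /polarize mulrC; under eq_fun do rewrite mulrC.
exact/cvgCMl/cvgC_sum.
Qed.

Section PointwiseLimit.
Variables (R : realType) (H : lmodType R[i]).
Variables (A : set H) (u : nat -> H -> H -> R[i]) (L : H -> R).
Hypotheses (hA : lin_subspace A) (hu : forall n, sesquilinear_on A (u n)).
Hypothesis u_ge0 : forall n x, x \in A -> 0 <= u n x x.
Hypothesis uL : forall x, x \in A -> (fun n => qform (u n) x) @ \oo --> L x.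

Lemma cvgC_pointwise x y : x \in A -> y \in A -> cvgC (fun n => u n x y) (polarize L x y).
Proof.
move=> hx hy; under eq_fun do rewrite (polarizeE hA (hu _) (u_ge0 _)) //.
by apply: cvgC_polarize => c; apply: uL; apply: subspaceDZ.
Qed.

Lemma polarize_lim_sesq : sesquilinear_on A (polarize L).
Proof.
split=> a x y z hx hy hz; have hxy := subspaceDZ hA a hy hx; rewrite addrC in hxy.
- apply: cvgC_unique (cvgC_pointwise hxy hz) _.
  under eq_fun do rewrite (hu _).1 //.
  by apply: cvgCD; [apply: cvgCMl |]; apply: cvgC_pointwise.
- apply: cvgC_unique (cvgC_pointwise hz hxy) _.
  under eq_fun do rewrite (hu _).2 //.
  by apply: cvgCD; [apply: cvgCMl |]; apply: cvgC_pointwise.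
Qed.

Lemma polarize_lim_diag x : x \in A -> polarize L x x = (L x)%:C%C.
Proof.
move=> hx; apply: cvgC_unique (cvgC_pointwise hx hx) _.
by under eq_fun do rewrite (qformE (u_ge0 _)) //; apply/cvgC_real/uL.
Qed.

Lemma polarize_lim_ge0 x : x \in A -> 0 <= polarize L x x.
Proof.
move=> hx; rewrite polarize_lim_diag // ler0c.
apply: (ler_cvg_to (cvg_cst 0) (uL hx)); apply: nearW => n.
exact: (qform_ge0 (u_ge0 n) hx).
Qed.

Lemma qform_polarize_lim x : x \in A -> qform (polarize L) x = L x.
Proof. by move=> hx; rewrite /qform polarize_lim_diag. Qed.

End PointwiseLimit.

Section HilbertSpace.
Variables (R : realType) (H : lmodType R[i]) (hs : hilbert H).
Local Notation C := R[i].

Lemma lin_subspaceT : lin_subspace [set: H].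
Proof. by split; [exact: in_setT | split => *; exact: in_setT]. Qed.

Lemma ip_sesquilinear : sesquilinear_on [set: H] (ip hs).
Proof.
split=> a x y z _ _ _; first exact: ip_linl.
by rewrite [LHS]ip_sym ip_linl rmorphD rmorphM (ip_sym hs x z) (ip_sym hs y z).
Qed.

Definition sqnorm (x : H) : R := qform (ip hs) x.

Lemma ip_diag_ge0 x : x \in [set: H] -> 0 <= ip hs x x.
Proof. by move=> _; apply: ip_ge0. Qed.

Lemma sqnorm0 : sqnorm 0 = 0.
Proof. by rewrite /sqnorm /qform (sesq0l lin_subspaceT ip_sesquilinear) ?in_setT. Qed.

Lemma sqnorm_ge0 x : 0 <= sqnorm x.
Proof. exact: (qform_ge0 ip_diag_ge0 (in_setT x)). Qed.

Lemma sqnormD_le x y : sqnorm (x + y) <= 2%:R * sqnorm x + 2%:R * sqnorm y.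
Proof. exact: (qformD_le lin_subspaceT ip_sesquilinear ip_diag_ge0 (in_setT x) (in_setT y)). Qed.

Lemma sqnormZ (a : C) x : sqnorm (a *: x) = Re (a * Num.conj a) * sqnorm x.
Proof. exact: (qformZ lin_subspaceT ip_sesquilinear a (in_setT x)). Qed.

Lemma sqnormN x : sqnorm (- x) = sqnorm x.
Proof. by rewrite -scaleN1r sqnormZ rmorphN1 mulrNN mulr1 mul1r. Qed.

Lemma sqnorm_eq0 x : sqnorm x = 0 -> x = 0.
Proof.
by move=> x0; apply: (@ip_eq0 _ _ hs); rewrite (qformE ip_diag_ge0) ?in_setT // -/(sqnorm x) x0.
Qed.

Lemma hnorm_sqnorm x : hnorm hs x = Num.sqrt (sqnorm x).
Proof. by []. Qed.

Lemma dense_subspaceT : dense_subspace hs [set: H].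
Proof.
split=> [|x e e0]; first exact: lin_subspaceT.
by exists x; rewrite in_setT hnorm_sqnorm subrr sqnorm0 sqrtr0.
Qed.

Definition vcvg (a : nat -> H) (x : H) := (fun n => sqnorm (a n - x)) @ \oo --> 0.

Lemma vcvg_cst x : vcvg (fun=> x) x.
Proof. by rewrite /vcvg subrr sqnorm0; apply: cvg_cst. Qed.

Lemma vcvgD a b x y : vcvg a x -> vcvg b y -> vcvg (fun n => a n + b n) (x + y).
Proof.
move=> ax bx; apply: (@squeeze_cvgr _ _ _ _ (fun=> 0)
  (fun n => 2%:R * sqnorm (a n - x) + 2%:R * sqnorm (b n - y))); last 2 first.
- exact: cvg_cst.
- by rewrite -[0](addr0 0) -{1 2}[0](mulr0 2%:R); apply: cvgD; apply: cvgM => //; apply: cvg_cst.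
apply: nearW => n; rewrite sqnorm_ge0 /=.
by rewrite opprD addrACA sqnormD_le.
Qed.

Lemma vcvgZ (c : C) a x : vcvg a x -> vcvg (fun n => c *: a n) (c *: x).
Proof.
move=> ax; rewrite /vcvg -(mulr0 (Re (c * Num.conj c))).
by under eq_fun do rewrite -scalerBr sqnormZ; apply: cvgM => //; apply: cvg_cst.
Qed.

Lemma vcvgDZ (c : C) a b x y : vcvg a x -> vcvg b y ->
  vcvg (fun n => a n + c *: b n) (x + c *: y).
Proof. by move=> ax bx; apply/vcvgD/vcvgZ. Qed.

Lemma vcvg_lt a x e : vcvg a x -> 0 < e ->
  exists N, forall n, (N <= n)%N -> sqnorm (a n - x) < e.
Proof.
move=> ax e0; have [N _ hN] := cvgr0_norm_lt _ ax _ e0.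
by exists N => n /hN; rewrite /= ger0_norm ?sqnorm_ge0.
Qed.

Lemma dense_approx (D : set H) x : dense_subspace hs D ->
  exists a : nat -> H, (forall n, a n \in D) /\ vcvg a x.
Proof.
move=> hD; have /choice[a ha] : forall n, exists y, y \in D /\ hnorm hs (x - y) < harmonic n.
  by move=> n; apply: hD.2; apply: harmonic_gt0.
exists a; split=> [n|]; first by case: (ha n).
apply: (@squeeze_cvgr _ _ _ _ (fun=> 0) (fun n => harmonic n ^+ 2)); last 2 first.
- exact: cvg_cst.
- by under eq_fun do rewrite expr2; rewrite -(mulr0 0); apply: cvgM; apply: cvg_harmonic.
apply: nearW => n; rewrite sqnorm_ge0 /= -opprB sqnormN.
have [_ /ltW] := ha n; rewrite hnorm_sqnorm => le_h.
by rewrite -(sqr_sqrtr (sqnorm_ge0 _)) !expr2 ler_pM ?sqrtr_ge0.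
Qed.

End HilbertSpace.

Arguments lin_subspaceT {R H}.

Section BoundedForms.
Variables (R : realType) (H : lmodType R[i]) (hs : hilbert H).
Variables (A : set H) (f : H -> H -> R[i]) (M : R).
Hypotheses (hA : lin_subspace A) (hf : sesquilinear_on A f).
Hypotheses (f_ge0 : forall x, x \in A -> 0 <= f x x) (M0 : 0 < M).
Hypothesis f_le : forall x, x \in A -> qform f x <= M * sqnorm hs x.
Local Notation sqnorm := (sqnorm hs).
Local Notation vcvg := (vcvg hs).

Lemma qform_vcvg_close a b x : (forall n, a n \in A) -> (forall n, b n \in A) ->
  vcvg a x -> vcvg b x -> forall e, 0 < e ->
  exists N, forall n m, (N <= n)%N -> (N <= m)%N -> `|qform f (a n) - qform f (b m)| < e.
Proof.
move=> aA bA ax bx e e0.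
have [d d0 hd] := qform_ucont hA hf f_ge0 (M * (2%:R + 2%:R * sqnorm x)) e0.
set r := Order.min 1 (d / (4%:R * M)).
have r0 : 0 < r by rewrite lt_min ltr01 divr_gt0 // mulr_gt0.
have r1 : r <= 1 by rewrite ge_min lexx.
have rd : M * (4%:R * r) <= d.
  have : r <= d / (4%:R * M) by rewrite ge_min lexx orbT.
  by rewrite ler_pdivlMr ?mulr_gt0 //; congr (_ <= _); ring.
have [Na hNa] := vcvg_lt ax r0; have [Nb hNb] := vcvg_lt bx r0.
exists (maxn Na Nb) => n m hn hm.
have an := hNa n (leq_trans (leq_maxl _ _) hn).
have bm := hNb m (leq_trans (leq_maxr _ _) hm).
have -> : a n = b m + (a n - b m) by rewrite addrC subrK.
apply: hd; [exact: bA | exact: subspaceB | |].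
- rewrite (le_trans (f_le (bA m))) // ler_pM2l //.
  rewrite -{1}[b m](subrK x); apply: le_trans (sqnormD_le _ _ _) _.
  by rewrite lerD2r -[leRHS]mulr1 ler_pM2l //; apply: ltW; apply: lt_le_trans bm _.
- apply: le_lt_trans (f_le (subspaceB hA (aA n) (bA m))) _.
  have hab : sqnorm (a n - b m) <= 2%:R * sqnorm (a n - x) + 2%:R * sqnorm (b m - x).
    have -> : a n - b m = (a n - x) + - (b m - x) by rewrite opprB addrA subrK.
    by rewrite -(sqnormN hs (b m - x)) sqnormD_le.
  apply: lt_le_trans rd; rewrite ltr_pM2l //; lra.
Qed.

Lemma qform_vcvg_cvgn a x : (forall n, a n \in A) -> vcvg a x ->
  cvgn (fun n => qform f (a n)).
Proof.
move=> aA ax; apply/cauchy_cvgP/cauchy_exP => e e0.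
have [N hN] := qform_vcvg_close aA aA ax ax e0.
by exists (qform f (a N)); exists N => // n /= hn; rewrite /ball /= hN.
Qed.

Lemma qform_vcvg_sub a b x : (forall n, a n \in A) -> (forall n, b n \in A) ->
  vcvg a x -> vcvg b x -> (fun n => qform f (a n) - qform f (b n)) @ \oo --> 0.
Proof.
move=> aA bA ax bx; apply/cvgrPdist_lt => e e0.
have [N hN] := qform_vcvg_close aA bA ax bx e0.
by exists N => // n /= hn; rewrite sub0r normrN hN.
Qed.

Lemma qform_vcvg a x : (forall n, a n \in A) -> x \in A -> vcvg a x ->
  (fun n => qform f (a n)) @ \oo --> qform f x.
Proof.
move=> aA xA ax; have := qform_vcvg_sub aA (fun=> xA) ax (vcvg_cst hs x).
have -> : (fun n => qform f (a n)) = (fun n => qform f (a n) - qform f x + qform f x).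
  by apply/funext => n; rewrite subrK.
by rewrite -[X in _ --> X]add0r => h; apply: cvgD => //; apply: cvg_cst.
Qed.

End BoundedForms.

Section BoundedExtension.
Variables (R : realType) (H : lmodType R[i]) (hs : hilbert H).
Variables (D : set H) (w : H -> H -> R[i]) (M : R).
Hypotheses (hD : dense_subspace hs D) (hw : sesquilinear_on D w).
Hypotheses (w_ge0 : forall x, x \in D -> 0 <= w x x) (M0 : 0 < M).
Hypothesis w_le : forall x, x \in D -> qform w x <= M * sqnorm hs x.
Local Notation vcvg := (vcvg hs).

Let hDs : lin_subspace D := hD.1.

Let approx x : {a : nat -> H | (forall n, a n \in D) /\ vcvg a x} :=
  cid (dense_approx x hD).

Let approx_in x n : sval (approx x) n \in D. Proof. by case: (svalP (approx x)). Qed.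
Let approx_vcvg x : vcvg (sval (approx x)) x. Proof. by case: (svalP (approx x)). Qed.

Let ext_qform x : R := limn (fun n => qform w (sval (approx x) n)).

Definition extension : H -> H -> R[i] := polarize ext_qform.

Let qform_ext_cvg a x : (forall n, a n \in D) -> vcvg a x ->
  (fun n => qform w (a n)) @ \oo --> ext_qform x.
Proof.
move=> aD ax; have := qform_vcvg_sub hDs hw w_ge0 M0 w_le aD (approx_in x) ax (approx_vcvg x).
have := qform_vcvg_cvgn hDs hw w_ge0 M0 w_le (approx_in x) (approx_vcvg x).
set b := sval (approx x) => bx.
have -> : (fun n => qform w (a n)) = (fun n => qform w (a n) - qform w (b n) + qform w (b n)).
  by apply/funext => n; rewrite subrK.
by rewrite -[ext_qform x]add0r => ab; apply: cvgD.
Qed.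

Lemma extension_cvg a b x y : (forall n, a n \in D) -> (forall n, b n \in D) ->
  vcvg a x -> vcvg b y -> cvgC (fun n => w (a n) (b n)) (extension x y).
Proof.
move=> aD bD ax bx; under eq_fun do rewrite (polarizeE hDs hw w_ge0) //.
apply: cvgC_polarize => c; apply: qform_ext_cvg; last exact: vcvgDZ.
by move=> n; apply: subspaceDZ.
Qed.

Lemma extension_eq x y : x \in D -> y \in D -> extension x y = w x y.
Proof.
move=> xD yD; apply: cvgC_unique (cvgC_cst (w x y)).
exact: extension_cvg (fun=> xD) (fun=> yD) (vcvg_cst hs x) (vcvg_cst hs y).
Qed.

Let approx_cvg x y := extension_cvg (approx_in x) (approx_in y) (approx_vcvg x) (approx_vcvg y).

Lemma extension_sesq : sesquilinear_on [set: H] extension.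
Proof.
split=> a x y z _ _ _.
- have axy n : a *: sval (approx x) n + sval (approx y) n \in D.
    by rewrite addrC subspaceDZ.
  have := extension_cvg axy (approx_in z) (vcvgD (vcvgZ a (approx_vcvg x)) (approx_vcvg y))
    (approx_vcvg z).
  move/cvgC_unique; apply; under eq_fun do rewrite hw.1 //.
  by apply: cvgCD; [apply: cvgCMl |]; apply: approx_cvg.
- have axy n : a *: sval (approx x) n + sval (approx y) n \in D.
    by rewrite addrC subspaceDZ.
  have := extension_cvg (approx_in z) axy (approx_vcvg z)
    (vcvgD (vcvgZ a (approx_vcvg x)) (approx_vcvg y)).
  move/cvgC_unique; apply; under eq_fun do rewrite hw.2 //.
  by apply: cvgCD; [apply: cvgCMl |]; apply: approx_cvg.
Qed.

Let extension_diag x : extension x x = (ext_qform x)%:C%C.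
Proof.
apply: cvgC_unique (approx_cvg x x) _; under eq_fun do rewrite (qformE w_ge0) //.
exact/cvgC_real/qform_ext_cvg/approx_vcvg/approx_in.
Qed.

Lemma qform_extension_cvg a x : (forall n, a n \in D) -> vcvg a x ->
  (fun n => qform w (a n)) @ \oo --> qform extension x.
Proof. by rewrite /qform extension_diag; apply: qform_ext_cvg. Qed.

Lemma extension_ge0 x : 0 <= extension x x.
Proof.
rewrite extension_diag ler0c.
apply: (ler_cvg_to (cvg_cst 0) (qform_ext_cvg (approx_in x) (approx_vcvg x))).
by apply: nearW => n; apply: (qform_ge0 w_ge0).
Qed.

Section Comparison.
Variables (t : H -> H -> R[i]) (K : R).
Hypotheses (ht : sesquilinear_on [set: H] t) (t_ge0 : forall x, x \in [set: H] -> 0 <= t x x).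
Hypotheses (K0 : 0 < K) (t_le : forall x, x \in [set: H] -> qform t x <= K * sqnorm hs x).

Let qform_t_cvg x : (fun n => qform t (sval (approx x) n)) @ \oo --> qform t x.
Proof.
exact: (qform_vcvg lin_subspaceT ht t_ge0 K0 t_le (fun n => in_setT _) (in_setT x) (approx_vcvg x)).
Qed.

Lemma qform_extension_ge : (forall p, p \in D -> qform t p <= qform w p) ->
  forall x, qform t x <= qform extension x.
Proof.
move=> tw x; have ext_cvg := qform_extension_cvg (approx_in x) (approx_vcvg x).
apply: (ler_cvg_to (@qform_t_cvg x) ext_cvg).
by apply: nearW => n; apply: tw.
Qed.

Lemma qform_extension_le : (forall p, p \in D -> qform w p <= qform t p) ->
  forall x, qform extension x <= qform t x.
Proof.
move=> wt x; have ext_cvg := qform_extension_cvg (approx_in x) (approx_vcvg x).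
apply: (ler_cvg_to ext_cvg (@qform_t_cvg x)).
by apply: nearW => n; apply: wt.
Qed.

End Comparison.

Lemma qform_extension_bounded x : qform extension x <= M * sqnorm hs x.
Proof.
have sq_le y : y \in [set: H] -> qform (ip hs) y <= 1 * sqnorm hs y by rewrite mul1r.
have := qform_vcvg lin_subspaceT (ip_sesquilinear hs) (@ip_diag_ge0 _ _ hs) ltr01 sq_le
  (fun n => in_setT (sval (approx x) n)) (in_setT x) (approx_vcvg x).
move=> /(cvgM (cvg_cst M)) sq_cvg.
apply: (ler_cvg_to (qform_extension_cvg (approx_in x) (approx_vcvg x)) sq_cvg).
by apply: nearW => n; apply: w_le.
Qed.

End BoundedExtension.

Section Forms.
Variables (R : realType) (H : lmodType R[i]) (hs : hilbert H).
Local Notation C := R[i].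
Local Notation form := (Defs.form H).
Local Notation sqnorm := (sqnorm hs).

Definition form_of (A : set H) (f : H -> H -> C) : form :=
  Form A (fun x y => if (x \in A) && (y \in A) then f x y else 0).

Lemma form_ofE A f x y : x \in A -> y \in A -> fval (form_of A f) x y = f x y.
Proof. by move=> hx hy; rewrite /= hx hy. Qed.

Lemma qform_form_of A f x : x \in A -> qform (fval (form_of A f)) x = qform f x.
Proof. by move=> hx; rewrite /qform form_ofE. Qed.

Lemma form_ext (t s : form) : is_form hs t -> is_form hs s -> fdom t = fdom s ->
  (forall x y, x \in fdom t -> y \in fdom t -> fval t x y = fval s x y) -> t = s.
Proof.
case: t => A f [_ _ _ f0]; case: s => B g [_ _ _ g0] /= AB fg; subst B.
congr Form; apply/funext => x; apply/funext => y.
have [[xA yA]|xyA] := pselect (x \in A /\ y \in A); first exact: fg.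
by rewrite [LHS](f0 x y xyA) [RHS](g0 x y xyA).
Qed.

Lemma form_addE (t s : form) :
  form_add t s = form_of (fdom t `&` fdom s) (fun x y => fval t x y + fval s x y).
Proof. by []. Qed.

Lemma form_addC (t s : form) : form_add t s = form_add s t.
Proof.
rewrite !form_addE setIC; congr Form; apply/funext => x; apply/funext => y.
by case: ifP => // _; rewrite addrC.
Qed.

Lemma sesquilinear_on_sub (A B : set H) f : A `<=` B ->
  sesquilinear_on B f -> sesquilinear_on A f.
Proof.
by move=> AB [f1 f2]; split=> a x y z /set_mem/AB/mem_set hx /set_mem/AB/mem_set hy
  /set_mem/AB/mem_set hz; [apply: f1 | apply: f2].
Qed.

Lemma is_form_of A f : dense_subspace hs A -> sesquilinear_on A f -> is_form hs (form_of A f).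
Proof.
move=> hA [f1 f2]; have hAs := hA.1; split=> // [a x y z hx hy hz|a x y z hx hy hz|x y /=].
- by rewrite !form_ofE ?f1 // addrC subspaceDZ.
- by rewrite !form_ofE ?f2 // addrC subspaceDZ.
- by case: (x \in A) => //; case: (y \in A) => // /(_ (conj isT isT)).
Qed.

Lemma form_sesquilinear (t : form) : is_form hs t -> sesquilinear_on (fdom t) (fval t).
Proof. by case. Qed.

Lemma form_subspace (t : form) : is_form hs t -> lin_subspace (fdom t).
Proof. by case=> [[]]. Qed.

Definition qbounded_on (A : set H) (f : H -> H -> C) :=
  exists M, 0 < M /\ forall p, p \in A -> qform f p <= M * sqnorm p.

Lemma qbounded_on_le (A B : set H) f g : A `<=` B ->
  (forall p, p \in A -> qform f p <= qform g p) -> qbounded_on B g -> qbounded_on A f.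
Proof.
move=> AB fg [M [M0 hM]]; exists M; split=> // p hp.
by apply: le_trans (fg p hp) (hM p _); apply/mem_set/AB/set_mem.
Qed.

(* Normalising a vector of positive norm to norm 1 divides [qform] by its squared norm. *)
Lemma bounded_formP (t : form) : is_form hs t -> positive_form t ->
  bounded_form hs t <-> qbounded_on (fdom t) (fval t).
Proof.
move=> ht t_ge0; have hA := form_subspace ht; have hf := form_sesquilinear ht.
split=> [[M hM]|[M [M0 hM]]]; last first.
  exists M => x hx nx; have n1 : sqnorm x = 1.
    by rewrite -(sqr_sqrtr (sqnorm_ge0 hs x)) -hnorm_sqnorm nx expr1n.
  by rewrite (qformE t_ge0) // ger0_norm ?ler0c ?(qform_ge0 t_ge0) // lecR -[M]mulr1 -n1 hM.
exists (`|M| + 1); split=> [|p hp]; first by rewrite ltr_wpDl.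
have [p0|p_neq0] := eqVneq (sqnorm p) 0.
  by rewrite p0 mulr0 (sqnorm_eq0 p0) /qform (sesq0l hA hf) ?(subspace0 hA).
have np : 0 < sqnorm p by rewrite lt_def p_neq0 sqnorm_ge0.
set r := Num.sqrt (sqnorm p); have r0 : 0 < r by rewrite sqrtr_gt0.
have r2 : r ^+ 2 = sqnorm p by rewrite sqr_sqrtr // ltW.
have rV : Re ((r^-1)%:C%C * Num.conj (r^-1)%:C%C) = r ^- 2.
  by rewrite ReM /= oppr0 mulr0 subr0 -expr2 exprVn.
have := hM ((r^-1)%:C%C *: p) (subspaceZ hA _ hp).
rewrite hnorm_sqnorm sqnormZ rV -r2 mulVf ?sqrtr1 ?expf_neq0 ?gt_eqF //.
rewrite (qformE t_ge0) ?(subspaceZ hA) // ger0_norm ?ler0c ?(qform_ge0 t_ge0) ?(subspaceZ hA) //.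
rewrite lecR (qformZ hA hf) // rV => /(_ erefl) hp'.
rewrite -ler_pdivrMr ?exprn_gt0 // mulrC (le_trans hp') //.
by rewrite (le_trans (ler_norm M)) // lerDl.
Qed.

End Forms.

Section VfAlgebra.
Variables (R : realType) (H : lmodType R[i]) (hs : hilbert H).
Local Notation form := (Defs.form H).
Local Notation qbounded t := (qbounded_on hs (fdom t) (fval t)).

Lemma Vf_form (t : form) : Vf hs t -> is_form hs t. Proof. by case. Qed.
Lemma Vf_ge0 (t : form) : Vf hs t -> positive_form t. Proof. by case. Qed.

Lemma Vf_bounded (t : form) : Vf hs t -> bounded_form hs t <-> qbounded t.
Proof. by move=> vt; apply: bounded_formP; [apply: Vf_form | apply: Vf_ge0]. Qed.

Lemma Vf_domT (t : form) : Vf hs t -> qbounded t -> fdom t = [set: H].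
Proof. by move=> vt /(Vf_bounded vt).2; case: vt. Qed.

Lemma Vf_qform_ge0 (t : form) p : Vf hs t -> p \in fdom t -> 0 <= qform (fval t) p.
Proof. by move=> vt hp; apply: (qform_ge0 (Vf_ge0 vt) hp). Qed.

Lemma Vf_form_of (A : set H) f : dense_subspace hs A -> sesquilinear_on A f ->
  (forall x, x \in A -> 0 <= f x x) -> (qbounded_on hs A f -> A = [set: H]) ->
  Vf hs (form_of A f).
Proof.
move=> hA hf f_ge0 hT; have ht := is_form_of hA hf.
have t_ge0 : positive_form (form_of A f) by move=> x hx; rewrite form_ofE // f_ge0.
split=> // /(bounded_formP ht t_ge0) bt; apply: hT.
by apply: (qbounded_on_le _ _ bt) => // p hp; rewrite qform_form_of.
Qed.

Lemma qform_form_add (t s : form) p : p \in fdom t `&` fdom s ->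
  qform (fval (form_add t s)) p = qform (fval t) p + qform (fval s) p.
Proof. by move=> hp; rewrite form_addE qform_form_of // /qform ReD. Qed.

Lemma qbounded_summand (t s : form) : Vf hs s -> fdom t `<=` fdom s ->
  qbounded (form_add t s) -> qbounded t.
Proof.
move=> vs ts; apply: qbounded_on_le => [p tp|p tp]; first by split=> //; apply: ts.
have hp : p \in fdom t `&` fdom s by rewrite in_setI tp; apply/mem_set/ts/set_mem.
by rewrite qform_form_add // lerDl (Vf_qform_ge0 vs) //; move: hp; rewrite in_setI => /andP[].
Qed.

Lemma qbounded_add (t s : form) : qbounded t -> qbounded s -> qbounded (form_add t s).
Proof.
move=> [M [M0 hM]] [N [N0 hN]]; exists (M + N); split=> [|p hp]; first exact: addr_gt0.
rewrite qform_form_add // mulrDl; move: hp; rewrite in_setI => /andP[pt ps].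
by apply: lerD; [apply: hM | apply: hN].
Qed.

Lemma Vf_add_sub (t s : form) : Vf hs t -> Vf hs s -> fdom t `<=` fdom s ->
  Vf hs (form_add t s).
Proof.
move=> vt vs ts; have dts : fdom t `&` fdom s = fdom t := setIidl ts.
have ht : is_form hs (form_add t s).
  rewrite form_addE dts; apply: is_form_of; first by case: (Vf_form vt).
  apply: sesquilinear_onD; first exact: form_sesquilinear (Vf_form vt).
  exact: sesquilinear_on_sub ts (form_sesquilinear (Vf_form vs)).
have pos : positive_form (form_add t s).
  move=> x hx; rewrite form_addE form_ofE //; move: hx; rewrite in_setI => /andP[xt xs].
  by apply: addr_ge0; [apply: (Vf_ge0 vt) | apply: (Vf_ge0 vs)].
split=> // /(bounded_formP ht pos)/(qbounded_summand vs ts)/(Vf_domT vt).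
by rewrite /= dts.
Qed.

Lemma oplus_def_sub (t s : form) : Vf hs t -> Vf hs s -> oplus_def hs t s ->
  fdom t `<=` fdom s \/ fdom s `<=` fdom t.
Proof.
move=> vt vs [/(Vf_bounded vt)/(Vf_domT vt) ->|[/(Vf_bounded vs)/(Vf_domT vs) ->|->]];
  by [right | left | left].
Qed.

Lemma Vf_add (t s : form) : Vf hs t -> Vf hs s -> oplus_def hs t s -> Vf hs (form_add t s).
Proof.
move=> vt vs /(oplus_def_sub vt vs) [ts|st]; first exact: Vf_add_sub.
by rewrite form_addC; apply: Vf_add_sub.
Qed.

End VfAlgebra.

Section VfD.
Variables (R : realType) (H : lmodType R[i]) (hs : hilbert H) (D : set H).
Local Notation form := (Defs.form H).
Local Notation qbounded t := (qbounded_on hs (fdom t) (fval t)).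
Local Notation Q := (VfD hs D).

Lemma VfD_Vf (t : form) : Q t -> Vf hs t. Proof. by case. Qed.

Lemma VfD_dom (t : form) : Q t -> qbounded t \/ fdom t = D.
Proof. by case=> vt [/(Vf_bounded vt)|]; [left | right]. Qed.

Lemma VfD_intro (t : form) : Vf hs t -> qbounded t \/ fdom t = D -> Q t.
Proof. by move=> vt [/(Vf_bounded vt)|]; split=> //; [left | right]. Qed.

Lemma VfD_domT (t : form) : Q t -> qbounded t -> fdom t = [set: H].
Proof. by move/VfD_Vf/Vf_domT. Qed.

Lemma VfD_unbounded (t : form) : Q t -> ~ qbounded t -> fdom t = D.
Proof. by move/VfD_dom => [|]. Qed.

Lemma VfD_supD (t : form) : Q t -> D `<=` fdom t.
Proof. by move=> qt; case: (VfD_dom qt) => [/(VfD_domT qt) ->|->]. Qed.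

Lemma VfD0 : Q (form0 H).
Proof.
have h0 : is_form hs (form0 H).
  by split=> //= *; [exact: dense_subspaceT | rewrite mulr0 addr0 | rewrite mulr0 addr0].
have v0 : Vf hs (form0 H) by split=> // x _; rewrite /= lexx.
apply: VfD_intro => //; left; exists 1; split=> // p _.
by rewrite mul1r /qform /= sqnorm_ge0.
Qed.

Lemma VfD_oplus (t s : form) : Q t -> Q s -> oplus_def hs t s.
Proof.
move=> qt qs; case: (VfD_dom qt) => [/(Vf_bounded (VfD_Vf qt))|dt]; first by left.
case: (VfD_dom qs) => [/(Vf_bounded (VfD_Vf qs))|ds]; first by right; left.
by right; right; rewrite dt ds.
Qed.

Lemma VfD_add (t s : form) : Q t -> Q s -> Q (form_add t s).
Proof.
move=> qt qs; apply: VfD_intro; first exact: Vf_add (VfD_Vf qt) (VfD_Vf qs) (VfD_oplus qt qs).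
case: (VfD_dom qt) => [bt|dt]; last by right; rewrite /= dt; apply: setIidl; apply: VfD_supD.
case: (VfD_dom qs) => [bs|ds]; first by left; apply: qbounded_add.
by right; rewrite /= ds; apply: setIidr; apply: VfD_supD.
Qed.

(* For unbounded [y], [D(x (+) y) = D(y)] and [x (+) y] is unbounded as well, so it
   has domain [D]. *)
Lemma VfD_summand (x y : form) : Vf hs x -> Vf hs y -> oplus_def hs x y ->
  Q (form_add x y) -> Q y.
Proof.
move=> vx vy hxy qxy; apply: VfD_intro => //.
have [by_|nby] := pselect (qbounded y); [by left | right].
have dxy : fdom (form_add x y) = fdom y.
  case: hxy => [/(Vf_bounded vx)/(Vf_domT vx) /= ->|[/(Vf_bounded vy)//|/= ->]].
  - exact: setTI.
  - exact: setIid.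
have yx : fdom y `<=` fdom x by rewrite -dxy => p [].
case: (VfD_dom qxy) => [bxy|]; last by rewrite dxy.
by exfalso; apply/nby/(qbounded_summand vx yx); rewrite form_addC.
Qed.

Lemma VfD_sub_gea : sub_gea (Vf hs) (oplus_def hs) (@form_add R H) (form0 H) Q.
Proof.
split=> [t /VfD_Vf //|//|x y vx vy hxy]; first exact: VfD0.
move=> [[qx qy]|[[qx qxy]|[qy qxy]]]; split=> //.
- exact: VfD_add.
- exact: VfD_summand qxy.
- have hyx : oplus_def hs y x by case: hxy => [|[|]]; [right; left | left | right; right].
  by rewrite form_addC in qxy; apply: VfD_summand hyx qxy.
Qed.

Lemma VfD_oplus_total (t s : form) : Q t -> Q s ->
  restr_def (oplus_def hs) (@form_add R H) Q t s.
Proof. by move=> qt qs; split; [apply: VfD_oplus | apply: VfD_add]. Qed.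

End VfD.

Section Completion.
Variables (R : realType) (H : lmodType R[i]) (hs : hilbert H) (D : set H).
Hypothesis hD : dense_subspace hs D.
Local Notation C := R[i].
Local Notation form := (Defs.form H).
Local Notation qbounded t := (qbounded_on hs (fdom t) (fval t)).
Local Notation Q := (VfD hs D).

Definition form_le (t s : form) :=
  fdom s `<=` fdom t /\ forall p, p \in fdom s -> qform (fval t) p <= qform (fval s) p.

Lemma VfD_qbounded_on (t : form) : Q t -> qbounded_on hs D (fval t) -> qbounded t.
Proof.
move=> qt bt; have [//|nbt] := pselect (qbounded t).
by rewrite (VfD_unbounded qt nbt).
Qed.

Definition VfD_completion_of (w : H -> H -> C) (z : form) :=
  [/\ Q z, (forall x y, x \in D -> y \in D -> fval z x y = w x y),
    (forall t, Q t -> (forall p, p \in D -> qform (fval t) p <= qform w p) -> form_le t z)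
  & (forall t, Q t -> (forall p, p \in D -> qform w p <= qform (fval t) p) -> form_le z t)].

Section CompletionCases.
Variable w : H -> H -> C.
Hypotheses (hw : sesquilinear_on D w) (w_ge0 : forall x, x \in D -> 0 <= w x x).

Lemma VfD_completion_unbounded : ~ qbounded_on hs D w -> VfD_completion_of w (form_of D w).
Proof.
move=> w_unb; have vz : Vf hs (form_of D w) by apply: Vf_form_of.
split=> [||t qt tw|t qt wt].
- by apply: VfD_intro => //; right.
- exact: form_ofE.
- by split=> [|p hp]; [exact: (VfD_supD qt) | rewrite qform_form_of // tw].
have dt : fdom t = D.
  apply: (VfD_unbounded qt) => bt; apply: w_unb.
  exact: qbounded_on_le (VfD_supD qt) wt bt.
by split=> [|p]; rewrite dt // => hp; rewrite qform_form_of // wt.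
Qed.

Variable M : R.
Hypotheses (M0 : 0 < M) (w_le : forall p, p \in D -> qform w p <= M * sqnorm hs p).
Let e := extension w hD.

Let qform_e x : qform (fval (form_of [set: H] e)) x = qform e x.
Proof. by rewrite qform_form_of ?in_setT. Qed.

(* A bounded member of V_fD is defined everywhere, so [e] can be compared with it. *)
Let bounded_cmp (t : form) : Q t -> qbounded t ->
  ((forall p, p \in D -> qform (fval t) p <= qform w p) ->
     forall x, qform (fval t) x <= qform e x) /\
  ((forall p, p \in D -> qform w p <= qform (fval t) p) ->
     forall x, qform e x <= qform (fval t) x).
Proof.
move=> qt bt; have dt := VfD_domT qt bt; have vt := VfD_Vf qt.
have [K [K0 t_le]] := bt; rewrite dt in t_le.
have ht : sesquilinear_on [set: H] (fval t) by rewrite -dt; exact: form_sesquilinear (Vf_form vt).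
have t_ge0 : forall x, x \in [set: H] -> 0 <= fval t x x by rewrite -dt; exact: Vf_ge0 vt.
split; [exact: (qform_extension_ge hD hw w_ge0 M0 w_le ht t_ge0 K0 t_le)
       | exact: (qform_extension_le hD hw w_ge0 M0 w_le ht t_ge0 K0 t_le)].
Qed.

Lemma VfD_completion_bounded : VfD_completion_of w (form_of [set: H] e).
Proof.
have e_ge0 x : x \in [set: H] -> 0 <= e x x.
  by move=> _; exact: (extension_ge0 hD hw w_ge0 M0 w_le x).
have vz : Vf hs (form_of [set: H] e).
  apply: Vf_form_of => //; first exact: dense_subspaceT.
  exact: (extension_sesq hD hw w_ge0 M0 w_le).
have e_eq x y : x \in D -> y \in D -> e x y = w x y.
  exact: (extension_eq hD hw w_ge0 M0 w_le).
split=> [||t qt tw|t qt wt].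
- apply: VfD_intro => //; left; exists M; split=> // p _.
  by rewrite qform_e; apply: (qform_extension_bounded hD hw w_ge0 M0 w_le).
- by move=> x y xD yD; rewrite form_ofE ?in_setT // e_eq.
- have bt : qbounded t.
    apply: VfD_qbounded_on => //; exists M; split=> // p pD.
    by apply: le_trans (tw p pD) _; apply: w_le.
  split=> [|p _]; first by rewrite (VfD_domT qt bt).
  by rewrite qform_e; apply: (bounded_cmp qt bt).1.
split=> [p _ //|p]; rewrite qform_e.
have [bt|nbt] := pselect (qbounded t); first by move=> _; apply: (bounded_cmp qt bt).2.
by rewrite (VfD_unbounded qt nbt) => pD; rewrite /qform e_eq //; apply: wt.
Qed.

End CompletionCases.

Lemma VfD_completion (w : H -> H -> C) : sesquilinear_on D w ->
  (forall x, x \in D -> 0 <= w x x) -> exists z : form, VfD_completion_of w z.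
Proof.
move=> hw w_ge0; have [[M [M0 w_le]]|w_unb] := pselect (qbounded_on hs D w).
- by eexists; exact: (VfD_completion_bounded hw w_ge0 M0 w_le).
- by eexists; exact: (VfD_completion_unbounded hw w_ge0 w_unb).
Qed.

End Completion.

Section InducedOrder.
Variables (R : realType) (H : lmodType R[i]) (hs : hilbert H) (D : set H).
Hypothesis hD : dense_subspace hs D.
Local Notation form := (Defs.form H).
Local Notation qbounded t := (qbounded_on hs (fdom t) (fval t)).
Local Notation Q := (VfD hs D).
Local Notation VfD_le :=
  (ind_le Q (restr_def (oplus_def hs) (@form_add R H) Q) (@form_add R H)).

Lemma form_le_of_VfD_le (t s : form) : VfD_le t s -> form_le t s.
Proof.
move=> [z [qz _ <-]]; split=> [p [] //|p hp].
rewrite qform_form_add // lerDl (Vf_qform_ge0 (VfD_Vf qz)) //.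
by move: hp; rewrite in_setI => /andP[].
Qed.

Lemma form_add_ext (x z y : form) : Vf hs x -> Vf hs z -> oplus_def hs x z -> Vf hs y ->
  fdom x `&` fdom z = fdom y ->
  (forall a b, a \in fdom y -> b \in fdom y -> fval x a b + fval z a b = fval y a b) ->
  form_add x z = y.
Proof.
move=> vx vz hxz vy dxz xzy.
apply: form_ext; [exact: Vf_form (Vf_add vx vz hxz) | exact: Vf_form vy | exact: dxz |].
by move=> a b /=; rewrite dxz => ha hb; rewrite ha hb xzy.
Qed.

(* The difference [y - x] lives on [D(y)]; when [y] is unbounded it is completed into
   V_fD, and boundedness of both [x] and the completion would make [y] bounded. *)
Lemma VfD_difference (x y : form) : Q x -> Q y -> form_le x y ->
  exists z : form, [/\ Q z, fdom x `&` fdom z = fdom y &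
    forall a b, a \in fdom y -> b \in fdom y -> fval z a b = fval y a b - fval x a b].
Proof.
move=> qx qy [yx xy]; have vx := VfD_Vf qx; have vy := VfD_Vf qy.
set g := fun a b => fval y a b - fval x a b.
have gs : sesquilinear_on (fdom y) g.
  apply: sesquilinear_onB; first exact: form_sesquilinear (Vf_form vy).
  exact: sesquilinear_on_sub yx (form_sesquilinear (Vf_form vx)).
have x_in p : p \in fdom y -> p \in fdom x by move=> /set_mem/yx/mem_set.
have qg p : p \in fdom y -> qform g p = qform (fval y) p - qform (fval x) p.
  by move=> _; rewrite /qform /g ReD; case: (fval x p p).
have g_ge0 p : p \in fdom y -> 0 <= g p p.
  move=> hp; rewrite /g (qformE (Vf_ge0 vy) hp) (qformE (Vf_ge0 vx) (x_in p hp)).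
  by rewrite -rmorphB ler0c subr_ge0 xy.
have [by_|nby] := pselect (qbounded y).
  have dy := VfD_domT qy by_.
  have dx : fdom x = [set: H] by apply/seteqP; split=> // p; rewrite -dy; apply: yx.
  rewrite dy in gs g_ge0 qg.
  have vz : Vf hs (form_of [set: H] g) by apply: Vf_form_of => //; exact: dense_subspaceT.
  exists (form_of [set: H] g); split=> [||a b _ _]; last by rewrite form_ofE ?in_setT.
  - apply: VfD_intro => //; left; apply: (qbounded_on_le _ _ by_); rewrite ?dy // => p _.
    by rewrite qform_form_of ?in_setT // qg ?in_setT // gerBl (Vf_qform_ge0 vx) // dx in_setT.
  - by rewrite dx dy setIT.
have dy := VfD_unbounded qy nby; rewrite dy in gs g_ge0 qg x_in.
have [z [qz zg _ _]] := VfD_completion hD gs g_ge0.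
exists z; split=> [//||a b]; rewrite dy; last exact: zg.
case: (VfD_dom qx) => [bx|->]; last by apply: setIidl; apply: VfD_supD qz.
case: (VfD_dom qz) => [bz|->]; last by apply: setIidr; apply: VfD_supD qx.
exfalso; apply: nby; apply: (VfD_qbounded_on qy); rewrite -dy.
have [[Mx [Mx0 hx]] [Mz [Mz0 hz]]] := (bx, bz).
exists (Mx + Mz); split=> [|p hp]; first exact: addr_gt0.
have pD : p \in D by rewrite -dy.
have qz_eq : qform (fval z) p = qform (fval y) p - qform (fval x) p.
  by rewrite -qg // /qform zg.
have := hx p (x_in p pD); have := hz p (mem_set (VfD_supD qz (set_mem pD))).
rewrite qz_eq mulrDl; lra.
Qed.

Lemma VfD_le_of_form_le (x y : form) : Q x -> Q y -> form_le x y -> VfD_le x y.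
Proof.
move=> qx qy xy; have [z [qz dxz zyx]] := VfD_difference qx qy xy.
exists z; split=> //; first exact: VfD_oplus_total.
apply: form_add_ext (VfD_Vf qx) (VfD_Vf qz) (VfD_oplus qx qz) (VfD_Vf qy) dxz _.
by move=> a b ha hb; rewrite zyx // addrC subrK.
Qed.

End InducedOrder.

Section Completeness.
Variables (R : realType) (H : lmodType R[i]) (hs : hilbert H) (D : set H).
Hypothesis hD : dense_subspace hs D.
Local Notation form := (Defs.form H).
Local Notation Q := (VfD hs D).
Local Notation VfD_le :=
  (ind_le Q (restr_def (oplus_def hs) (@form_add R H) Q) (@form_add R H)).

Definition qform_lim (u : nat -> form) (p : H) : R := limn (fun n => qform (fval (u n)) p).

Section MonotoneLimit.
Variable u : nat -> form.
Hypothesis qu : forall n, Q (u n).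
Hypothesis u_cvg : forall p, p \in D -> cvgn (fun n => qform (fval (u n)) p).

Let u_sesq n : sesquilinear_on D (fval (u n)).
Proof.
exact: sesquilinear_on_sub (VfD_supD (qu n)) (form_sesquilinear (Vf_form (VfD_Vf (qu n)))).
Qed.

Let u_ge0 n x : x \in D -> 0 <= fval (u n) x x.
Proof. by move=> /set_mem/(VfD_supD (qu n))/mem_set; apply: (Vf_ge0 (VfD_Vf (qu n))). Qed.

Let u_lim p : p \in D -> (fun n => qform (fval (u n)) p) @ \oo --> qform_lim u p.
Proof. exact: u_cvg. Qed.

Lemma VfD_limit : exists z : form, [/\ Q z,
  (forall t, Q t -> (forall p, p \in D -> qform (fval t) p <= qform_lim u p) -> form_le t z)
  & (forall t, Q t -> (forall p, p \in D -> qform_lim u p <= qform (fval t) p) -> form_le z t)].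
Proof.
have hDs := hD.1.
have [z [qz _ z_ge z_le]] := VfD_completion hD (polarize_lim_sesq hDs u_sesq u_ge0 u_lim)
  (polarize_lim_ge0 hDs u_sesq u_ge0 u_lim).
exists z; split=> // t qt tu; [apply: z_ge | apply: z_le] => // p pD;
  by rewrite (qform_polarize_lim hDs u_sesq u_ge0 u_lim pD); apply: tu.
Qed.

End MonotoneLimit.

Lemma VfD_lub (u : nat -> form) : (forall n, Q (u n)) -> (forall n, form_le (u n) (u n.+1)) ->
  forall b, Q b -> (forall n, form_le (u n) b) ->
  exists s, [/\ Q s, forall n, form_le (u n) s &
    forall c, Q c -> (forall n, form_le (u n) c) -> form_le s c].
Proof.
move=> qu u_incr b qb ub.
have u_nd p : p \in D -> nondecreasing_seq (fun n => qform (fval (u n)) p).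
  move=> pD; apply/nondecreasing_seqP => n; apply: (u_incr n).2.
  exact/mem_set/(VfD_supD (qu n.+1))/set_mem.
have u_cvg p : p \in D -> cvgn (fun n => qform (fval (u n)) p).
  move=> pD; apply: nondecreasing_is_cvgn (u_nd p pD) _.
  exists (qform (fval b) p) => _ [n _ <-]; apply: (ub n).2.
  exact/mem_set/(VfD_supD qb)/set_mem.
have [s [qs s_ge s_le]] := VfD_limit qu u_cvg.
exists s; split=> //.
  move=> n; apply: s_ge (qu n) _ => p pD.
  exact: nondecreasing_cvgn_le (u_nd p pD) (u_cvg p pD) n.
move=> c qc uc; apply: (s_le _ qc) => p pD; apply: (ler_cvg_to (u_cvg p pD) (cvg_cst _)).
by apply: nearW => n; apply: (uc n).2; exact/mem_set/(VfD_supD qc)/set_mem.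
Qed.

Lemma VfD_glb (u : nat -> form) : (forall n, Q (u n)) -> (forall n, form_le (u n.+1) (u n)) ->
  exists s, [/\ Q s, forall n, form_le s (u n) &
    forall b, Q b -> (forall n, form_le b (u n)) -> form_le b s].
Proof.
move=> qu u_decr.
have u_ni p : p \in D -> nonincreasing_seq (fun n => qform (fval (u n)) p).
  move=> pD; apply/nonincreasing_seqP => n; apply: (u_decr n).2.
  exact/mem_set/(VfD_supD (qu n))/set_mem.
have u_cvg p : p \in D -> cvgn (fun n => qform (fval (u n)) p).
  move=> pD; apply: nonincreasing_is_cvgn (u_ni p pD) _.
  exists 0 => _ [n _ <-]; apply: Vf_qform_ge0 (VfD_Vf (qu n)) _.
  exact/mem_set/(VfD_supD (qu n))/set_mem.
have [s [qs s_ge s_le]] := VfD_limit qu u_cvg.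
exists s; split=> //.
  move=> n; apply: s_le (qu n) _ => p pD.
  exact: nonincreasing_cvgn_ge (u_ni p pD) (u_cvg p pD) n.
move=> b qb bu; apply: (s_ge _ qb) => p pD; apply: (ler_cvg_to (cvg_cst _) (u_cvg p pD)).
by apply: nearW => n; apply: (bu n).2; exact/mem_set/(VfD_supD (qu n))/set_mem.
Qed.

Lemma VfD_mono_dedekind_up : mono_dedekind_up Q VfD_le.
Proof.
move=> u qu u_incr [b [qb ub]].
have [s [qs us s_min]] := VfD_lub qu (fun n => form_le_of_VfD_le (u_incr n)) qb
  (fun n => form_le_of_VfD_le (ub n)).
exists s; split=> // [n|c qc uc]; apply: VfD_le_of_form_le => //.
by apply: s_min => // n; apply: form_le_of_VfD_le.
Qed.

Lemma VfD_mono_dedekind_down : mono_dedekind_down Q VfD_le.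
Proof.
move=> u qu u_decr.
have [s [qs su s_max]] := VfD_glb qu (fun n => form_le_of_VfD_le (u_decr n)).
exists s; split=> // [n|b qb bu]; apply: VfD_le_of_form_le => //.
by apply: s_max => // n; apply: form_le_of_VfD_le.
Qed.

End Completeness.

Theorem theorem5p7 (R : realType) (H : lmodType R[i]) (hs : hilbert H)
    (hinf : infinite_dim H) (D : set H) (hD : dense_subspace hs D) :
  [/\ sub_gea (Vf hs) (oplus_def hs) (@form_add R H) (form0 H) (VfD hs D),
      (forall t s, VfD hs D t -> VfD hs D s ->
         restr_def (oplus_def hs) (@form_add R H) (VfD hs D) t s),
      mono_dedekind_up (VfD hs D)
        (ind_le (VfD hs D) (restr_def (oplus_def hs) (@form_add R H) (VfD hs D))
                (@form_add R H))
    & mono_dedekind_down (VfD hs D)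
        (ind_le (VfD hs D) (restr_def (oplus_def hs) (@form_add R H) (VfD hs D))
                (@form_add R H))].
Proof.
split; [exact: VfD_sub_gea | exact: VfD_oplus_total | |].
- exact: VfD_mono_dedekind_up hD.
- exact: VfD_mono_dedekind_down hD.
Qed.
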